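(* For any standard possibility frame with awareness $\mathscr{F}=(\Omega,\sqsubseteq,\mathcal{E},\mathcal{A})$ and any $\omega,\nu\in\Omega$, we have $\nu\in\mathcal{A}(\omega)$ if and only if $\omega\in\mathbf{A}(\downarrow\nu)$.
   Context: For a poset $(\Omega,\sqsubseteq)$, $\downarrow E=\{\omega\mid\omega\sqsubseteq\nu\text{ for some }\nu\in E\}$, $\downarrow\nu=\downarrow\{\nu\}$; $\rho(E)=\{\omega\mid\forall\omega'\sqsubseteq\omega\ \exists\omega''\sqsubseteq\omega'\colon\omega''\in\downarrow E\}$; $\mathcal{RO}(\Omega,\sqsubseteq)=\{E\mid\rho(E)=E\}$, a Boolean algebra under $\subseteq$ with meet $\cap$, join $E\sqcup F=\rho(E\cup F)$, complement $\neg E=\{\omega\mid\forall\omega'\sqsubseteq\omega,\ \omega'\notin E\}$. $\max(E)=\{\omega\in E\mid\text{no }\nu\in E\text{ with }\omega\sqsubseteq\nu,\ \nu\not\sqsubseteq\omega\}$. A possibility frame $(\Omega,\sqsubseteq,\mathcal{E})$: $\mathcal{E}$ a nonempty subset of $\mathcal{RO}(\Omega,\sqsubseteq)$ closed under binary $\cap$ and $\neg$; quasi-principal: for all $E\in\mathcal{E}$ and $\omega\in E$, $\omega\in\downarrow\max(E)$. A possibility frame with awareness is $(\Omega,\sqsubseteq,\mathcal{E},\mathcal{A})$ with $(\Omega,\sqsubseteq,\mathcal{E})$ quasi-principal with a maximum element $m$ in $(\Omega,\sqsubseteq)$, and $\mathcal{A}:\Omega\to\wp(\Omega)$ such that for all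 $\omega,\omega',\nu$: $m\in\mathcal{A}(\omega)$; if $\nu\in\mathcal{A}(\omega)$ then $\downarrow\nu\in\mathcal{E}$; if $\omega'\sqsubseteq\omega$ then $\mathcal{A}(\omega)\subseteq\mathcal{A}(\omega')$; if $\nu\notin\mathcal{A}(\omega)$ then $\exists\omega'\sqsubseteq\omega\ \forall\omega''\sqsubseteq\omega'\ \nu\notin\mathcal{A}(\omega'')$; if $\nu\in\mathcal{A}(\omega)$, $E,E'\in\mathcal{E}$ and $\max(E\cap\downarrow\nu)\cup\max(E'\cap\downarrow\nu)\subseteq\mathcal{A}(\omega)$ then $\max((E\sqcup E')\cap\downarrow\nu)\subseteq\mathcal{A}(\omega)$; and $\mathcal{E}$ is closed under the operation $\mathbf{A}$ defined by: $\omega\in\mathbf{A}(E)$ iff for all $\omega'\sqsubseteq\omega$ and $\nu\in\mathcal{A}(\omega')$, $\max(E\cap\downarrow\nu)\cup\max(\neg E\cap\downarrow\nu)\subseteq\mathcal{A}(\omega')$. It is standard if for all $\omega,\nu$, $\nu\in\mathcal{A}(\omega)$ implies $\omega\in\mathbf{A}(\downarrow\nu)$. *)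

(* sets over a type T are predicates T -> Prop, compared with
   Leibniz equality (extensional via functional/propositional extensionality). *)
Set Implicit Arguments.

Section Poss.
Variable T : Type.
Variable le : T -> T -> Prop.

Definition poset : Prop :=
  (forall x, le x x) /\
  (forall x y z, le x y -> le y z -> le x z) /\
  (forall x y, le x y -> le y x -> x = y).

Definition down (E : T -> Prop) : T -> Prop :=
  fun w => exists v, E v /\ le w v.
Definition downp (v : T) : T -> Prop := down (fun x => x = v).

Definition rho (E : T -> Prop) : T -> Prop :=
  fun w => forall w', le w' w -> exists w'', le w'' w' /\ down E w''.

Definition RO (E : T -> Prop) : Prop := rho E = E.

Definition inter (E F : T -> Prop) : T -> Prop := fun w => E w /\ F w.

Definition join (E F : T -> Prop) : T -> Prop := rho (fun w => E w \/ F w).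

Definition neg (E : T -> Prop) : T -> Prop :=
  fun w => forall w', le w' w -> ~ E w'.

Definition maxs (E : T -> Prop) : T -> Prop :=
  fun w => E w /\ ~ (exists v, E v /\ le w v /\ ~ le v w).

Definition subset (E F : T -> Prop) : Prop := forall x, E x -> F x.

Definition poss_frame (Ev : (T -> Prop) -> Prop) : Prop :=
  poset /\
  (exists E, Ev E) /\
  (forall E, Ev E -> RO E) /\
  (forall E F, Ev E -> Ev F -> Ev (inter E F)) /\
  (forall E, Ev E -> Ev (neg E)).

Definition quasi_principal (Ev : (T -> Prop) -> Prop) : Prop :=
  forall E, Ev E -> forall w, E w -> down (maxs E) w.

(* Aw w v  means  v ∈ 𝓐(w). *)
Definition Aop (Aw : T -> T -> Prop) (E : T -> Prop) : T -> Prop :=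
  fun w => forall w', le w' w -> forall v, Aw w' v ->
    subset (fun x => maxs (inter E (downp v)) x \/ maxs (inter (neg E) (downp v)) x)
           (Aw w').

Definition poss_frame_awareness (Ev : (T -> Prop) -> Prop)
    (Aw : T -> T -> Prop) (m : T) : Prop :=
  poss_frame Ev /\ quasi_principal Ev /\
  (forall w, le w m) /\
  (forall w, Aw w m) /\
  (forall w v, Aw w v -> Ev (downp v)) /\
  (forall w w', le w' w -> subset (Aw w) (Aw w')) /\
  (forall w v, ~ Aw w v ->
     exists w', le w' w /\ forall w'', le w'' w' -> ~ Aw w'' v) /\
  (forall w v E E', Aw w v -> Ev E -> Ev E' ->
     subset (fun x => maxs (inter E (downp v)) x \/ maxs (inter E' (downp v)) x)
            (Aw w) ->
     subset (maxs (inter (join E E') (downp v))) (Aw w)) /\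
  (forall E, Ev E -> Ev (Aop Aw E)).

Definition standard (Aw : T -> T -> Prop) : Prop :=
  forall w v, Aw w v -> Aop Aw (downp v) w.

Definition standard_poss_frame_awareness (Ev : (T -> Prop) -> Prop)
    (Aw : T -> T -> Prop) (m : T) : Prop :=
  poss_frame_awareness Ev Aw m /\ standard Aw.

End Poss.


(* Standardness is the forward direction.  Conversely, the top element m is
   always in A(w), so w in A(downp v) makes A(w) contain the maximal points of
   downp v /\ downp m = downp v, and v is the unique such point. *)

Section Awareness.
Variable T : Type.
Variable le : T -> T -> Prop.
Hypothesis le_refl : forall x, le x x.

Lemma downp_refl (v : T) : downp le v v.
Proof. exists v; split; [reflexivity | apply le_refl]. Qed.

Lemma maxs_of_greatest (E : T -> Prop) (v : T) :
  E v -> subset E (downp le v) -> maxs le E v.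
Proof.
  intros Ev Ebelow; split; [exact Ev |].
  intros [x [Ex [_ not_le_xv]]].
  destruct (Ebelow x Ex) as [y [-> le_xv]].
  exact (not_le_xv le_xv).
Qed.

Lemma Aop_downp_aware (Aw : T -> T -> Prop) (m w v : T) :
  le v m -> Aw w m -> Aop le Aw (downp le v) w -> Aw w v.
Proof.
  intros le_vm aware_m HA.
  apply (HA w (le_refl w) m aware_m v); left.
  apply maxs_of_greatest.
  - split; [apply downp_refl | exists m; split; [reflexivity | exact le_vm]].
  - intros x [below_v _]; exact below_v.
Qed.

End Awareness.

Theorem lemma3p5 (T : Type) (le : T -> T -> Prop) (Ev : (T -> Prop) -> Prop)
    (Aw : T -> T -> Prop) (m : T) :
  standard_poss_frame_awareness le Ev Aw m ->
  forall w v : T, Aw w v <-> Aop le Aw (downp le v) w.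
Proof.
  intros [[[[le_refl _] _] [_ [m_top [aware_m _]]]] std] w v.
  split.
  - apply std.
  - exact (Aop_downp_aware T le le_refl Aw m w v (m_top v) (aware_m w)).
Qed.
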